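(* Let $X$ be an exponential vector space over a field $K$ such that $Q(X)$ generates $X\smallsetminus X_0$. Then every maximal orderly independent subset of $Q(X)$ (i.e. every orderly independent $B\subseteq Q(X)$ not properly contained in any orderly independent subset of $Q(X)$) is a basis of $X\smallsetminus X_0$.
   Context: An exponential vector space (evs) over a field $K$ is a partially ordered set $(X,\leq)$ with a binary operation $+$ on $X$ and a map $K\times X\to X$, $(\alpha,x)\mapsto \alpha x$, such that: (A1) $(X,+)$ is a commutative semigroup with identity $\theta$; (A2) $x\leq y$ implies $x+z\leq y+z$ and $\alpha x\leq \alpha y$ for all $z\in X$, $\alpha\in K$; (A3) $\alpha(x+y)=\alpha x+\alpha y$, $\alpha(\beta x)=(\alpha\beta)x$, $(\alpha+\beta)x\leq \alpha x+\beta x$, $1x=x$; (A4) $\alpha x=\theta$ iff $\alpha=0$ or $x=\theta$; (A5) $x+(-1)x=\theta$ iff $x\in X_0$, where $X_0:=\{z\in X: y\not\leq z \text{ for all } y\in X\smallsetminus\{z\}\}$ (the set of minimal elements, called the primitive space; it is a vector space over $K$); (A6) for each $x\in X$ there is $p\in X_0$ with $p\leq x$. For $x\in X\smallsetminus X_0$ let $L(x):=\{z\in X: z\geq \alpha x+p \text{ for some } \alpha\in K\smallsetminus\{0\},\ p\in X_0\}$. A subset $B\subseteq X\smallsetminus X_0$ generates $X\smallsetminus X_0$ if $X\smallsetminus X_0=\bigcup_{b\in B}L(b)$. Elements $x,y\in X\smallsetminus X_0$ are orderly dependent if $x\in L(y)$ or $y\in L(x)$, and orderly independent otherwise; $B\subseteq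 X\smallsetminus X_0$ is orderly independent if any two distinct members of $B$ are orderly independent. A basis of $X\smallsetminus X_0$ is an orderly independent subset of $X\smallsetminus X_0$ that generates $X\smallsetminus X_0$. For $x\in X$ write $\downarrow x:=\{z\in X: z\leq x\}$. The feasible set is $Q(X):=\{x\in X\smallsetminus X_0: (\downarrow x\smallsetminus X_0)\subseteq L(x)\}$. *)

From mathcomp Require Import all_boot all_algebra.
Set Implicit Arguments. Unset Strict Implicit. Unset Printing Implicit Defensive.
Import GRing.Theory.
Local Open Scope ring_scope.

Definition primitive_of (X : Type) (le : X -> X -> Prop) (z : X) : Prop :=
  forall y : X, y <> z -> ~ le y z.

Record evs (K : fieldType) := EVS {
  car :> Type;
  le : car -> car -> Prop;
  add : car -> car -> car;
  smul : K -> car -> car;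
  theta : car;
  le_refl : forall x, le x x;
  le_antisym : forall x y, le x y -> le y x -> x = y;
  le_trans : forall x y z, le x y -> le y z -> le x z;
  addA : forall x y z, add x (add y z) = add (add x y) z;
  addC : forall x y, add x y = add y x;
  add0 : forall x, add theta x = x;
  le_add : forall x y z, le x y -> le (add x z) (add y z);
  le_smul : forall a x y, le x y -> le (smul a x) (smul a y);
  smul_addr : forall a x y, smul a (add x y) = add (smul a x) (smul a y);
  smul_smul : forall a b x, smul a (smul b x) = smul (a * b) x;
  smul_addl_le : forall a b x, le (smul (a + b) x) (add (smul a x) (smul b x));
  smul1 : forall x, smul 1 x = x;
  smul_eq0 : forall a x, smul a x = theta <-> (a = 0 \/ x = theta);
  addN_eq0 : forall x, add x (smul (-1) x) = theta <-> primitive_of le x;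
  below_primitive : forall x, exists p, primitive_of le p /\ le p x
}.

Section EVSDefs.
Variables (K : fieldType) (X : evs K).

Definition X0 (z : X) : Prop := primitive_of (@le K X) z.

Definition Lset (x : X) (z : X) : Prop :=
  exists (a : K) (p : X), a != 0 /\ X0 p /\ le (add (smul a x) p) z.

Definition generates (B : X -> Prop) : Prop :=
  (forall b, B b -> ~ X0 b) /\
  (forall z, ~ X0 z <-> exists b, B b /\ Lset b z).

Definition orderly_dependent (x y : X) : Prop := Lset y x \/ Lset x y.

Definition orderly_independent_set (B : X -> Prop) : Prop :=
  (forall b, B b -> ~ X0 b) /\
  (forall x y, B x -> B y -> x <> y -> ~ orderly_dependent x y).

Definition is_basis (B : X -> Prop) : Prop :=
  orderly_independent_set B /\ generates B.

Definition Qset (x : X) : Prop :=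
  ~ X0 x /\ (forall z, le z x -> ~ X0 z -> Lset x z).

Definition maximal_oi_subset_of (A B : X -> Prop) : Prop :=
  (forall b, B b -> A b) /\ orderly_independent_set B /\
  (forall C : X -> Prop, (forall c, C c -> A c) -> orderly_independent_set C ->
     (forall b, B b -> C b) -> forall c, C c -> B c).
End EVSDefs.

From Pilot Require Import Defs.
From mathcomp Require Import all_boot all_algebra.
From Stdlib Require Import Classical.
Set Implicit Arguments. Unset Strict Implicit. Unset Printing Implicit Defensive.
Import GRing.Theory.
Local Open Scope ring_scope.

(* Take z outside X_0. Since Q(X) generates, z lies in L(q) for some feasible
   q. If q is not in B, maximality of B makes q orderly dependent on some b in
   B. Either q lies in L(b), or b lies above a q + p; in the latter case
   a q + p is a non-primitive element below the feasible b, so it lies in L(b),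
   and cancelling the shift and the scalar gives q in L(b) again. As L is
   transitive, z lies in L(b). *)

Section ExponentialVectorSpace.
Variables (K : fieldType) (X : evs K).
Implicit Types (x y z p q b : X) (a c : K).

Lemma add_theta x : Defs.add x (theta X) = x.
Proof. by rewrite Defs.addC add0. Qed.

Lemma smul_theta a : smul a (theta X) = theta X.
Proof. by apply/smul_eq0; right. Qed.

Lemma X0_smul a p : X0 p -> X0 (smul a p).
Proof.
move=> /addN_eq0 pN; apply/addN_eq0.
by rewrite smul_smul mulrC -smul_smul -smul_addr pN smul_theta.
Qed.

Lemma add_shuffle x y z : Defs.add (Defs.add x y) (Defs.add z (smul (-1) y)) =
  Defs.add (Defs.add x z) (Defs.add y (smul (-1) y)).
Proof.
rewrite !Defs.addA; congr Defs.add.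
by rewrite -!Defs.addA; congr Defs.add; rewrite Defs.addC.
Qed.

Lemma X0_add p q : X0 p -> X0 q -> X0 (Defs.add p q).
Proof.
move=> /addN_eq0 pN /addN_eq0 qN; apply/addN_eq0.
by rewrite smul_addr add_shuffle pN qN add0.
Qed.

Lemma X0_addr_inv p x : X0 p -> X0 (Defs.add x p) -> X0 x.
Proof.
move=> /addN_eq0 pN /addN_eq0 xpN; apply/addN_eq0.
by rewrite -xpN smul_addr add_shuffle pN add_theta.
Qed.

Lemma X0_smul_inv a x : a != 0 -> X0 (smul a x) -> X0 x.
Proof.
by move=> a0 ax0; rewrite -[x]smul1 -(mulVf a0) -smul_smul; apply: X0_smul.
Qed.

Lemma le_X0_eq x y : X0 y -> le x y -> x = y.
Proof. by move=> y0 xy; apply: NNPP => /y0. Qed.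

Lemma Lset_not_X0 x z : ~ X0 x -> Lset x z -> ~ X0 z.
Proof.
move=> x0 [a [p [a0 [p0 le_z]]]] z0; apply/x0/(X0_smul_inv a0)/(X0_addr_inv p0).
by rewrite (le_X0_eq z0 le_z).
Qed.

Lemma Lset_smul_add a p q : a != 0 -> X0 p -> Lset q (Defs.add (smul a q) p).
Proof. by move=> a0 p0; exists a, p; split; [|split; last exact: le_refl]. Qed.

Lemma Lset_trans x y z : Lset x y -> Lset y z -> Lset x z.
Proof.
move=> [a [p [a0 [p0 le_y]]]] [c [p' [c0 [p'0 le_z]]]].
exists (c * a), (Defs.add (smul c p) p'); split; first by rewrite mulf_neq0.
split; first by apply: X0_add => //; apply: X0_smul.
apply: le_trans le_z; rewrite -smul_smul Defs.addA -smul_addr.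
by apply/le_add/le_smul.
Qed.

Lemma Lset_smul_addK a p b q :
  a != 0 -> X0 p -> Lset b (Defs.add (smul a q) p) -> Lset b q.
Proof.
move=> a0 p0 [c [p' [c0 [p'0 le_aqp]]]].
exists (a^-1 * c), (Defs.add (smul a^-1 p') (smul (- a^-1) p)).
split; first by rewrite mulf_neq0 ?invr_eq0.
split; first by apply: X0_add; apply: X0_smul.
have unshift : Defs.add (smul a^-1 (Defs.add (smul a q) p)) (smul (- a^-1) p) = q.
  rewrite smul_addr smul_smul mulVf // smul1 -Defs.addA -mulrN1 -smul_smul.
  by rewrite -smul_addr (proj2 (addN_eq0 p) p0) smul_theta add_theta.
rewrite -unshift -smul_smul Defs.addA -smul_addr.
by apply/le_add/le_smul.
Qed.

Lemma orderly_dependentC x y : orderly_dependent x y -> orderly_dependent y x.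
Proof. by case; [right | left]. Qed.

Lemma Qset_Lset_dependent b q :
  Qset b -> ~ X0 q -> orderly_dependent b q -> Lset b q.
Proof.
move=> [_ Qb] q0 [[a [p [a0 [p0 le_b]]]] | //].
have aqp0 : ~ X0 (Defs.add (smul a q) p) by apply/(Lset_not_X0 q0)/Lset_smul_add.
exact: Lset_smul_addK a0 p0 (Qb _ le_b aqp0).
Qed.

Lemma maximal_oi_dependent A B q :
  maximal_oi_subset_of A B -> A q -> ~ X0 q -> ~ B q ->
  exists2 b, B b & orderly_dependent b q.
Proof.
move=> [BA [[B0 Bindep] Bmax]] Aq q0 Bq; apply: NNPP => nodep.
apply: Bq; apply: (Bmax (fun y => B y \/ y = q)); [| split | by left | by right].
- by move=> y [/BA | ->].
- by move=> y [/B0 | ->].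
move=> x y [Bx | ->] [By | ->] xy.
- exact: Bindep.
- by move=> dep; apply: nodep; exists x.
- by move/orderly_dependentC => dep; apply: nodep; exists y.
- by case: xy.
Qed.

End ExponentialVectorSpace.

Theorem mainTheorem7 (K : fieldType) (X : evs K) :
  generates (@Qset K X) ->
  forall B : X -> Prop, maximal_oi_subset_of (@Qset K X) B -> is_basis B.
Proof.
move=> [_ genQ] B maxB; have [BQ [Boi _]] := maxB; have B0 := Boi.1.
split=> //; split=> // z; split; last first.
  by move=> [b [Bb Lbz]]; apply: Lset_not_X0 (B0 b Bb) Lbz.
move=> z0; have [q [Qq Lqz]] := proj1 (genQ z) z0.
have [Bq | nBq] := classic (B q); first by exists q.
have [b Bb dep] := maximal_oi_dependent maxB Qq Qq.1 nBq.
exists b; split=> //.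
exact: Lset_trans (Qset_Lset_dependent (BQ b Bb) Qq.1 dep) Lqz.
Qed.
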